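(* For every $(\mu,\sigma)\in\Theta$, $$\sup_{x\in\mathbb{R}}|F_{(\mu,\sigma)}(x)-F_{(0,1)}(x)|=\max\{U(\mu,\sigma),V(\mu,\sigma)\},$$ where $$U(\mu,\sigma)=1-\exp\Big\{-\max\Big\{\mu,-\frac{\mu}{\sigma}\Big\}\Big\},$$ $V(\mu,1)=0$, and for $\sigma\ne1$ $$V(\mu,\sigma)=|1-\sigma|\exp\Big\{\frac{\mu-\sigma\ln\sigma}{\sigma-1}\Big\}\,\mathbb{1}_{\{\mu/\ln(\sigma)<\min\{\sigma,1\}\}}.$$
   Context: For $\vartheta=(\mu,\sigma)\in\Theta=\mathbb{R}\times(0,\infty)$, $F_\vartheta(x)=1-\exp\{-(x-\mu)/\sigma\}$ for $x>\mu$ and $F_\vartheta(x)=0$ for $x\le\mu$ (two-parameter exponential cdf). *)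

From Stdlib Require Import Reals.
Open Scope R_scope.

Definition Fexp (mu sigma x : R) : R :=
  if Rle_dec x mu then 0 else 1 - exp (- ((x - mu) / sigma)).

Definition U (mu sigma : R) : R := 1 - exp (- Rmax mu (- (mu / sigma))).

Definition V (mu sigma : R) : R :=
  if Req_EM_T sigma 1 then 0
  else if Rlt_dec (mu / ln sigma) (Rmin sigma 1)
       then Rabs (1 - sigma) * exp ((mu - sigma * ln sigma) / (sigma - 1))
       else 0.

Definition KSset (mu sigma : R) : R -> Prop :=
  fun y => exists x : R, y = Rabs (Fexp mu sigma x - Fexp 0 1 x).

(* Put D(x) = F_(mu,sigma)(x) - F_(0,1)(x) and p = max(mu,0).
   - On (-oo, p] one of the two cdfs vanishes, so |D| is monotone there and
     |D(x)| <= |D(p)| = U(mu,sigma).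
   - On [p, +oo) D coincides with gap(x) = e^{-x} - e^{-(x-mu)/sigma}.  For
     sigma <> 1 the scaled function k = (1-sigma) gap is unimodal: it
     increases up to the critical point z = (mu - sigma ln sigma)/(1-sigma),
     decreases afterwards, and it is negative only to the left of z.  An
     order-theoretic lemma on such functions bounds |gap(x)| by |gap(p)| or,
     when p < z, by |gap(z)| = |1-sigma| e^{-z}.  For sigma = 1, |gap| is
     simply decreasing.
   - V(mu,sigma) is exactly |gap(z)| when p < z (the indicator condition
     mu/ln sigma < min(sigma,1) is equivalent to p < z) and 0 otherwise.
   Hence |D| <= max(U,V), and the bound is attained at p or at z, which
   gives the supremum. *)

From Stdlib Require Import Reals Lra Psatz.
From Coquelicot Require Import Coquelicot.
Open Scope R_scope.

Lemma exp_le a b : a <= b -> exp a <= exp b.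
Proof. intros [Hab | ->]; [left; apply exp_increasing |]; lra. Qed.

Lemma exp_sub_sign a b c : 0 <= (a - b) * c -> 0 <= (exp a - exp b) * c.
Proof.
  intros H. destruct (Rlt_or_le a b) as [Hab | Hba].
  - assert (exp a < exp b) by (apply exp_increasing; lra). nra.
  - assert (exp b <= exp a) by (apply exp_le; lra).
    destruct Hba as [Hba | ->]; [nra | lra].
Qed.

Lemma ln_sign s : 0 < s -> 0 <= (s - 1) * ln s.
Proof.
  intros Hs. pose proof (exp_sub_sign (ln s) 0 (ln s - 0)) as H.
  rewrite exp_ln, exp_0 in H by exact Hs. nra.
Qed.

Lemma ln_sign_strict s : 0 < s -> s <> 1 -> 0 < (s - 1) * ln s.
Proof.
  intros Hs Hs1. destruct (Rle_lt_or_eq_dec _ _ (ln_sign s Hs)) as [H | H];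
    [exact H | exfalso].
  assert (Hln : ln s = 0).
  { destruct (Rmult_integral _ _ (eq_sym H)) as [E | E]; [lra | exact E]. }
  apply Hs1, ln_inv; [exact Hs | lra | now rewrite Hln, ln_1].
Qed.

Lemma nondecreasing_of_deriv f f' a b :
  (forall c, derivable_pt_lim f c (f' c)) ->
  (forall c, a < c < b -> 0 <= f' c) -> a <= b -> f a <= f b.
Proof.
  intros Hd Hpos [Hab | ->]; [| lra].
  destruct (MVT_cor2 f f' a b Hab (fun c _ => Hd c)) as [c [E Hc]].
  specialize (Hpos c Hc). nra.
Qed.

Lemma nonincreasing_of_deriv f f' a b :
  (forall c, derivable_pt_lim f c (f' c)) ->
  (forall c, a < c < b -> f' c <= 0) -> a <= b -> f b <= f a.
Proof.
  intros Hd Hneg [Hab | ->]; [| lra].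
  destruct (MVT_cor2 f f' a b Hab (fun c _ => Hd c)) as [c [E Hc]].
  specialize (Hneg c Hc). nra.
Qed.

Section Unimodal.

Variables (k : R -> R) (z : R).
Hypothesis k_incr : forall a b, a <= b <= z -> k a <= k b.
Hypothesis k_decr : forall a b, z <= a <= b -> k b <= k a.
Hypothesis k_neg_left : forall y, k y < 0 -> y <= z.

Lemma unimodal_abs_bound p x : p <= x ->
  Rabs (k x) <= Rabs (k p) \/ (p < z /\ Rabs (k x) <= Rabs (k z)).
Proof.
  intros Hpx. destruct (Rlt_or_le (k x) 0) as [Hneg | Hnn].
  - assert (k p <= k x) by (apply k_incr; split; [lra | now apply k_neg_left]).
    left. rewrite !Rabs_left by lra. lra.
  - destruct (Rlt_or_le p z) as [Hpz | Hzp].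
    + assert (k x <= k z).
      { destruct (Rle_or_lt x z); [apply k_incr | apply k_decr]; lra. }
      right. split; [exact Hpz |]. rewrite !Rabs_pos_eq by lra. lra.
    + assert (k x <= k p) by (apply k_decr; lra).
      left. rewrite !Rabs_pos_eq by lra. lra.
Qed.

End Unimodal.

Lemma Fexp_below mu s x : x <= mu -> Fexp mu s x = 0.
Proof. intros H. unfold Fexp. destruct (Rle_dec x mu); [reflexivity | lra]. Qed.

Lemma Fexp_above mu s x : mu <= x -> Fexp mu s x = 1 - exp (- ((x - mu) / s)).
Proof.
  intros H. unfold Fexp. destruct (Rle_dec x mu); [| reflexivity].
  replace x with mu by lra. unfold Rminus, Rdiv.
  rewrite Rplus_opp_r, Rmult_0_l, Ropp_0, exp_0. ring.
Qed.

Lemma Fexp_mono mu s x y : 0 < s -> x <= y -> Fexp mu s x <= Fexp mu s y.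
Proof.
  intros Hs Hxy. destruct (Rle_or_lt y mu) as [Hy | Hy].
  - rewrite !Fexp_below by lra. lra.
  - rewrite (Fexp_above mu s y) by lra.
    assert (Hq : s * ((y - mu) / s) = y - mu) by (field; lra).
    destruct (Rle_or_lt x mu) as [Hx | Hx].
    + rewrite Fexp_below by exact Hx.
      assert (exp (- ((y - mu) / s)) <= exp 0) by (apply exp_le; nra).
      rewrite exp_0 in *. lra.
    + rewrite Fexp_above by lra.
      assert (s * ((x - mu) / s) = x - mu) by (field; lra).
      assert (exp (- ((y - mu) / s)) <= exp (- ((x - mu) / s)))
        by (apply exp_le; nra).
      lra.
Qed.

Definition ks_diff (mu s x : R) : R := Fexp mu s x - Fexp 0 1 x.

Definition gap (mu s x : R) : R := exp (- x) - exp (- ((x - mu) / s)).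

Lemma ks_diff_above mu s x : Rmax mu 0 <= x -> ks_diff mu s x = gap mu s x.
Proof.
  intros H. pose proof (Rmax_l mu 0). pose proof (Rmax_r mu 0).
  unfold ks_diff, gap. rewrite !Fexp_above by lra.
  replace ((x - 0) / 1) with x by field. ring.
Qed.

(* Left of p = max(mu,0) only one cdf is nonzero, so |D| grows up to p. *)
Lemma ks_diff_below mu s x : 0 < s -> x <= Rmax mu 0 ->
  Rabs (ks_diff mu s x) <= Rabs (ks_diff mu s (Rmax mu 0)).
Proof.
  intros Hs Hx. unfold ks_diff. destruct (Rle_or_lt 0 mu) as [Hm | Hm].
  - rewrite Rmax_left in * by exact Hm.
    rewrite !(Fexp_below mu) by lra.
    pose proof (Fexp_mono 0 1 (Rmin x 0) x Rlt_0_1 (Rmin_l x 0)) as Hnn.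
    rewrite Fexp_below in Hnn by apply Rmin_r.
    pose proof (Fexp_mono 0 1 x mu Rlt_0_1 Hx) as Hle.
    rewrite !Rabs_left1 by lra. lra.
  - rewrite Rmax_right in * by lra.
    rewrite !(Fexp_below 0) by lra.
    pose proof (Fexp_mono mu s (Rmin x mu) x Hs (Rmin_l x mu)) as Hnn.
    rewrite Fexp_below in Hnn by apply Rmin_r.
    pose proof (Fexp_mono mu s x 0 Hs Hx) as Hle.
    rewrite !Rabs_pos_eq by lra. lra.
Qed.

Lemma U_eq mu s : 0 < s -> U mu s = Rabs (ks_diff mu s (Rmax mu 0)).
Proof.
  intros Hs. unfold U. rewrite ks_diff_above by lra. unfold gap.
  assert (Hq : s * (mu / s) = mu) by (field; lra).
  destruct (Rle_or_lt 0 mu) as [Hm | Hm].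
  - rewrite !Rmax_left by nra.
    replace (- ((mu - mu) / s)) with 0 by (field; lra).
    assert (exp (- mu) <= exp 0) by (apply exp_le; lra).
    rewrite exp_0 in *. rewrite Rabs_left1 by lra. ring.
  - rewrite !Rmax_right by nra.
    replace (- ((0 - mu) / s)) with (- - (mu / s)) by (field; lra).
    assert (exp (- - (mu / s)) <= exp 0) by (apply exp_le; nra).
    rewrite Ropp_0, exp_0 in *. rewrite Rabs_pos_eq by lra. ring.
Qed.

(* For sigma = 1, gap(x) = e^{-x}(1 - e^mu) has decreasing absolute value. *)
Lemma gap_one_bound mu p x : p <= x -> Rabs (gap mu 1 x) <= Rabs (gap mu 1 p).
Proof.
  intros Hpx.
  assert (E : forall y, gap mu 1 y = exp (- y) * (1 - exp mu)).
  { intros y. unfold gap. replace (- ((y - mu) / 1)) with (- y + mu) by field.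
    rewrite exp_plus. ring. }
  rewrite !E, !Rabs_mult, !(Rabs_pos_eq (exp _)) by (left; apply exp_pos).
  apply Rmult_le_compat_r; [apply Rabs_pos | apply exp_le; lra].
Qed.

(* For sigma <> 1, the unique zero of the derivative of gap. *)
Definition crit (mu s : R) : R := (mu - s * ln s) / (1 - s).

Section CriticalPoint.

Variables (mu s : R).
Hypothesis s_pos : 0 < s.
Hypothesis s_ne1 : s <> 1.

Let one_sub_ne0 : 1 - s <> 0.
Proof. intros H. apply s_ne1. lra. Qed.

(* Derivative of the scaled gap (1-s) gap, and its sign: it has the sign
   of crit - c, because exp(-(c-mu)/s)/s - exp(-c) compares -(c-mu)/s with
   ln s - c. *)
Definition scaled_gap' (c : R) : R :=
  (1 - s) * (exp (- ((c - mu) / s)) / s - exp (- c)).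

Lemma scaled_gap_deriv c :
  derivable_pt_lim (fun x => (1 - s) * gap mu s x) c (scaled_gap' c).
Proof.
  apply is_derive_Reals. unfold gap, scaled_gap'.
  auto_derive; [exact I |]. unfold Rminus, Rdiv. ring.
Qed.

Lemma scaled_gap'_sign c : 0 <= (crit mu s - c) * scaled_gap' c.
Proof.
  set (A := - ((c - mu) / s)). set (B := ln s - c).
  assert (EB : exp B = s * exp (- c)).
  { unfold B, Rminus. rewrite exp_plus, exp_ln by exact s_pos. reflexivity. }
  assert (Hinv : 0 < / s) by (apply Rinv_0_lt_compat, s_pos).
  assert (Hsign : 0 <= (A - B) * ((crit mu s - c) * (1 - s))).
  { replace ((A - B) * ((crit mu s - c) * (1 - s)))
      with (((1 - s) * (crit mu s - c)) ^ 2 * / s)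
      by (unfold A, B, crit; field; split; [exact one_sub_ne0 | lra]).
    apply Rmult_le_pos; [apply pow2_ge_0 | lra]. }
  unfold scaled_gap'. fold A.
  replace ((crit mu s - c) * ((1 - s) * (exp A / s - exp (- c))))
    with ((exp A - exp B) * ((crit mu s - c) * (1 - s)) * / s)
    by (rewrite EB; field; lra).
  apply Rmult_le_pos; [apply exp_sub_sign, Hsign | lra].
Qed.

(* The scaled gap is negative only to the left of the critical point: right
   of it, -x exceeds -(x-mu)/s in the direction given by the sign of 1-s. *)
Lemma scaled_gap_neg_left x : (1 - s) * gap mu s x < 0 -> x <= crit mu s.
Proof.
  intros Hneg. destruct (Rle_or_lt x (crit mu s)) as [H | Hx]; [exact H | exfalso].
  set (a := - x). set (b := - ((x - mu) / s)).
  assert (E : (a - b) * (1 - s) * s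
              = (1 - s) ^ 2 * (x - crit mu s) + s * ((s - 1) * ln s)).
  { unfold a, b, crit. field. split; [exact one_sub_ne0 | lra]. }
  assert (Hsq : 0 < (1 - s) ^ 2) by (apply pow2_gt_0; exact one_sub_ne0).
  pose proof (ln_sign s s_pos) as Hln.
  assert (Hab : 0 <= (a - b) * (1 - s)) by nra.
  pose proof (exp_sub_sign a b (1 - s) Hab) as Hexp.
  unfold gap in Hneg. fold a b in Hneg. nra.
Qed.

Lemma gap_abs_bound p x : p <= x ->
  Rabs (gap mu s x) <= Rabs (gap mu s p)
  \/ (p < crit mu s /\ Rabs (gap mu s x) <= Rabs (gap mu s (crit mu s))).
Proof.
  intros Hpx. set (k := fun y => (1 - s) * gap mu s y).
  assert (k_incr : forall a b, a <= b <= crit mu s -> k a <= k b).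
  { intros a b Hab. apply (nondecreasing_of_deriv k scaled_gap');
      [exact scaled_gap_deriv | | lra].
    intros c Hc. pose proof (scaled_gap'_sign c). nra. }
  assert (k_decr : forall a b, crit mu s <= a <= b -> k b <= k a).
  { intros a b Hab. apply (nonincreasing_of_deriv k scaled_gap');
      [exact scaled_gap_deriv | | lra].
    intros c Hc. pose proof (scaled_gap'_sign c). nra. }
  assert (Hdiv : forall u v, Rabs (k u) <= Rabs (k v) ->
                             Rabs (gap mu s u) <= Rabs (gap mu s v)).
  { intros u v. unfold k. rewrite !Rabs_mult. apply Rmult_le_reg_l.
    apply Rabs_pos_lt, one_sub_ne0. }
  destruct (unimodal_abs_bound k (crit mu s) k_incr k_decr scaled_gap_neg_left
              p x Hpx) as [H | [Hpz H]].
  - left. exact (Hdiv _ _ H).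
  - right. split; [exact Hpz | exact (Hdiv _ _ H)].
Qed.

(* At the critical point e^{-(z-mu)/s} = s e^{-z}. *)
Lemma gap_at_crit : gap mu s (crit mu s) = (1 - s) * exp (- crit mu s).
Proof.
  unfold gap.
  replace (- ((crit mu s - mu) / s)) with (ln s + - crit mu s)
    by (unfold crit; field; split; [exact one_sub_ne0 | lra]).
  rewrite exp_plus, exp_ln by exact s_pos. ring.
Qed.

(* The indicator condition in V says exactly that z lies right of max(mu,0):
   with q = mu / ln s, z (1-s)^2 = (s - q) P and (z - mu)(1-s)^2 = s (1-q) P
   where P = (s-1) ln s > 0. *)
Lemma crit_condition : mu / ln s < Rmin s 1 <-> Rmax mu 0 < crit mu s.
Proof.
  pose proof (ln_sign_strict s s_pos s_ne1) as HP.
  assert (Hln : ln s <> 0) by (intros E; rewrite E in HP; lra).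
  set (q := mu / ln s).
  assert (Hsq : 0 < (1 - s) ^ 2) by (apply pow2_gt_0; exact one_sub_ne0).
  assert (Ez : crit mu s * (1 - s) ^ 2 = (s - q) * ((s - 1) * ln s))
    by (unfold crit, q; field; split; [exact Hln | exact one_sub_ne0]).
  assert (Ezm : (crit mu s - mu) * (1 - s) ^ 2 = s * (1 - q) * ((s - 1) * ln s))
    by (unfold crit, q; field; split; [exact Hln | exact one_sub_ne0]).
  assert (Hscale : forall u w, 0 < w -> (0 < u <-> 0 < u * w)).
  { intros u w Hw. split; intros Hu; [nra |].
    apply (Rmult_lt_reg_r w); lra. }
  assert (Hcrit : 0 < crit mu s <-> q < s).
  { rewrite (Hscale _ _ Hsq), Ez, <- (Hscale _ _ HP). lra. }
  assert (Hcrit_mu : mu < crit mu s <-> q < 1).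
  { assert (Hs1q : 0 < s * (1 - q) <-> q < 1)
      by (rewrite Rmult_comm, <- (Hscale _ _ s_pos); lra).
    rewrite <- Hs1q, (Hscale _ _ HP), <- Ezm, <- (Hscale _ _ Hsq). lra. }
  split.
  - intros Hq. pose proof (Rmin_l s 1). pose proof (Rmin_r s 1).
    apply Rmax_lub_lt; [apply Hcrit_mu | apply Hcrit]; lra.
  - intros Hz. pose proof (Rmax_l mu 0). pose proof (Rmax_r mu 0).
    apply Rmin_glb_lt; [apply Hcrit | apply Hcrit_mu]; lra.
Qed.

Lemma V_at_crit : Rmax mu 0 < crit mu s -> V mu s = Rabs (gap mu s (crit mu s)).
Proof.
  intros Hz. unfold V. destruct (Req_EM_T s 1) as [Hs1 | _]; [contradiction |].
  destruct (Rlt_dec (mu / ln s) (Rmin s 1)) as [_ | C];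
    [| exfalso; apply C, crit_condition, Hz].
  rewrite gap_at_crit, Rabs_mult, (Rabs_pos_eq (exp _)) by (left; apply exp_pos).
  do 2 f_equal. unfold crit. field. split; [exact one_sub_ne0 | lra].
Qed.

Lemma V_off_crit : ~ Rmax mu 0 < crit mu s -> V mu s = 0.
Proof.
  intros Hz. unfold V. destruct (Req_EM_T s 1) as [_ | _]; [reflexivity |].
  destruct (Rlt_dec (mu / ln s) (Rmin s 1)) as [C | _]; [| reflexivity].
  exfalso. apply Hz, crit_condition, C.
Qed.

End CriticalPoint.

Lemma V_one mu : V mu 1 = 0.
Proof. unfold V. destruct (Req_EM_T 1 1) as [_ | C]; [reflexivity | now contradiction C]. Qed.

Lemma ks_diff_bound mu s x : 0 < s ->
  Rabs (ks_diff mu s x) <= Rmax (U mu s) (V mu s).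
Proof.
  intros Hs. set (p := Rmax mu 0).
  assert (HU : Rabs (ks_diff mu s p) <= Rmax (U mu s) (V mu s))
    by (rewrite <- U_eq by exact Hs; apply Rmax_l).
  destruct (Rle_or_lt x p) as [Hxp | Hpx].
  { eapply Rle_trans; [apply ks_diff_below |]; assumption. }
  rewrite ks_diff_above by (left; exact Hpx).
  rewrite ks_diff_above in HU by apply Rle_refl.
  destruct (Req_dec s 1) as [-> | Hs1].
  { eapply Rle_trans; [apply (gap_one_bound mu p x); lra | exact HU]. }
  destruct (gap_abs_bound mu s Hs Hs1 p x) as [H | [Hz H]]; [lra | |].
  - eapply Rle_trans; [exact H | exact HU].
  - rewrite <- V_at_crit in H by assumption.
    eapply Rle_trans; [exact H | apply Rmax_r].
Qed.

(* The bound is attained, at max(mu,0) or at the critical point. *)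
Lemma ks_diff_attained mu s : 0 < s ->
  exists x, Rabs (ks_diff mu s x) = Rmax (U mu s) (V mu s).
Proof.
  intros Hs. destruct (Rle_or_lt (V mu s) (U mu s)) as [HVU | HUV].
  - exists (Rmax mu 0). rewrite (Rmax_left (U mu s)) by exact HVU. symmetry. now apply U_eq.
  - assert (HU0 : 0 <= U mu s) by (rewrite U_eq by exact Hs; apply Rabs_pos).
    rewrite (Rmax_right (U mu s)) by lra.
    destruct (Req_dec s 1) as [-> | Hs1]; [rewrite V_one in HUV; lra |].
    destruct (Rlt_dec (Rmax mu 0) (crit mu s)) as [Hz | Hz];
      [| rewrite V_off_crit in HUV by assumption; lra].
    exists (crit mu s). rewrite ks_diff_above by lra. symmetry.
    now apply V_at_crit.
Qed.

Theorem mainTheorem5 (mu sigma : R) (hsigma : 0 < sigma) :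
  is_lub (KSset mu sigma) (Rmax (U mu sigma) (V mu sigma)).
Proof.
  split.
  - intros y [x ->]. exact (ks_diff_bound mu sigma x hsigma).
  - intros b Hb. destruct (ks_diff_attained mu sigma hsigma) as [x Hx].
    rewrite <- Hx. apply Hb. now exists x.
Qed.
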